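(* Let $K_1\subset\mathbb C^m$ be a compact set with $A_D(K_1)=\overline{\mathcal O}(K_1)$, let $\omega\in A_D(K_1)$, and let \[ K=\{(z,w)\in\mathbb C^{m+1}: z\in K_1,\ w=\omega(z)\} \] be the graph of $\omega$. Then $A_D(K)=\overline{\mathcal O}(K)$.
   Context: For a compact $K\subset\mathbb C^n$: $\overline{\mathcal O}(K)$ is the closure in $C(K)$ (supremum norm) of restrictions to $K$ of functions holomorphic on some open neighbourhood of $K$; $A_D(K)$ is the set of continuous functions $f:K\to\mathbb C$ such that for every open disc $D\subset\mathbb C$ and every injective holomorphic mapping $\phi:D\to\mathbb C^n$ with $\phi(D)\subset K$, $f\circ\phi$ is holomorphic on $D$. *)

From Stdlib Require Import Reals.
Open Scope R_scope.

Definition Cx : Type := (R * R)%type.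
Definition Czero : Cx := (0, 0).
Definition Cadd (a b : Cx) : Cx := (fst a + fst b, snd a + snd b).
Definition Copp (a : Cx) : Cx := (- fst a, - snd a).
Definition Csub (a b : Cx) : Cx := Cadd a (Copp b).
Definition Cmul (a b : Cx) : Cx :=
  (fst a * fst b - snd a * snd b, fst a * snd b + snd a * fst b).
Definition Cabs (a : Cx) : R := sqrt (fst a * fst a + snd a * snd a).

(* A point of C^n is represented by a map v : nat -> Cx whose coordinates of
   index >= n vanish; [inCn n v] expresses this. Coordinates are v 0, ..., v (n-1). *)
Definition vec : Type := nat -> Cx.
Definition inCn (n : nat) (v : vec) : Prop := forall i, (n <= i)%nat -> v i = Czero.
Definition vadd (u v : vec) : vec := fun i => Cadd (u i) (v i).
Definition vsub (u v : vec) : vec := fun i => Csub (u i) (v i).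

Fixpoint normsq (n : nat) (v : vec) : R :=
  match n with
  | O => 0
  | S k => normsq k v + Cabs (v k) * Cabs (v k)
  end.
Definition vnorm (n : nat) (v : vec) : R := sqrt (normsq n v).

Fixpoint lin (n : nat) (a h : vec) : Cx :=
  match n with
  | O => Czero
  | S k => Cadd (lin k a h) (Cmul (a k) (h k))
  end.

Definition open_in (n : nat) (U : vec -> Prop) : Prop :=
  (forall x, U x -> inCn n x) /\
  forall x, U x -> exists r, 0 < r /\
    forall y, inCn n y -> vnorm n (vsub y x) < r -> U y.

Definition compact_in (n : nat) (K : vec -> Prop) : Prop :=
  (forall x, K x -> inCn n x) /\
  forall (I : Type) (U : I -> vec -> Prop),
    (forall i, open_in n (U i)) ->
    (forall x, K x -> exists i, U i x) ->
    exists l : list I, forall x, K x -> exists i, List.In i l /\ U i x.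

Definition cont_on (n : nat) (K : vec -> Prop) (f : vec -> Cx) : Prop :=
  forall x, K x -> forall eps, 0 < eps -> exists d, 0 < d /\
    forall y, K y -> vnorm n (vsub y x) < d -> Cabs (Csub (f y) (f x)) < eps.

Definition holo_on (n : nat) (U : vec -> Prop) (f : vec -> Cx) : Prop :=
  forall z, U z -> exists a : vec, forall eps, 0 < eps -> exists d, 0 < d /\
    forall h, inCn n h -> 0 < vnorm n h -> vnorm n h < d ->
      Cabs (Csub (Csub (f (vadd z h)) (f z)) (lin n a h)) <= eps * vnorm n h.

Definition disc (c : Cx) (r : R) (z : Cx) : Prop := Cabs (Csub z c) < r.

Definition holo1_on (D : Cx -> Prop) (g : Cx -> Cx) : Prop :=
  forall z, D z -> exists a : Cx, forall eps, 0 < eps -> exists d, 0 < d /\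
    forall h, 0 < Cabs h -> Cabs h < d ->
      Cabs (Csub (Csub (g (Cadd z h)) (g z)) (Cmul a h)) <= eps * Cabs h.

(* Obar(K): closure in C(K) of restrictions of functions holomorphic on
   open neighbourhoods of K *)
Definition Obar (n : nat) (K : vec -> Prop) (f : vec -> Cx) : Prop :=
  cont_on n K f /\
  forall eps, 0 < eps -> exists U : vec -> Prop, exists g : vec -> Cx,
    open_in n U /\ (forall x, K x -> U x) /\ holo_on n U g /\
    forall x, K x -> Cabs (Csub (f x) (g x)) < eps.

Definition AD (n : nat) (K : vec -> Prop) (f : vec -> Cx) : Prop :=
  cont_on n K f /\
  forall (c : Cx) (r : R) (phi : Cx -> vec),
    0 < r ->
    (forall i, (i < n)%nat -> holo1_on (disc c r) (fun z => phi z i)) ->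
    (forall z1 z2, disc c r z1 -> disc c r z2 -> phi z1 = phi z2 -> z1 = z2) ->
    (forall z, disc c r z -> K (phi z)) ->
    holo1_on (disc c r) (fun z => f (phi z)).

Definition trunc (m : nat) (v : vec) : vec :=
  fun i => if Nat.ltb i m then v i else Czero.

Definition graph (m : nat) (K1 : vec -> Prop) (omega : vec -> Cx) (v : vec) : Prop :=
  inCn (S m) v /\ K1 (trunc m v) /\ v m = omega (trunc m v).

(* The map z |-> (z, omega z) identifies K1 with the graph K, and a function f on K
   with F z := f (z, omega z) on K1.  Discs in K are exactly the lifts of discs in K1
   (truncate to the first m coordinates; the last coordinate is omega of the first
   ones, which is holomorphic along the disc because omega is in A_D(K1)), so f is in
   A_D(K) iff F is in A_D(K1).  For the uniform algebras: an approximant g of F near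
   K1 gives the approximant g o trunc of f near K; conversely, approximants g of f
   near K and h of omega near K1 give g (z, h z), which is close to F because g is
   uniformly continuous on a uniform neighbourhood of the compact graph.  The
   hypothesis A_D(K1) = Obar(K1) converts between the two descriptions on K1. *)
From Pilot Require Import Defs.
From Stdlib Require Import Reals Lra Psatz FunctionalExtensionality Arith.
Open Scope R_scope.

Lemma Cx_eq (a b : Cx) : fst a = fst b -> snd a = snd b -> a = b.
Proof. destruct a, b; simpl; intros -> ->; reflexivity. Qed.

Ltac Cx_ring := apply Cx_eq; unfold Csub, Cadd, Copp, Cmul, Czero; simpl; ring.

Lemma Rle_of_sqr_le x y : 0 <= y -> x * x <= y * y -> x <= y.
Proof. intros; nra. Qed.

Lemma Cabs_ge0 a : 0 <= Cabs a.
Proof. apply sqrt_pos. Qed.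

Lemma Cabs_sqr a : Cabs a * Cabs a = fst a * fst a + snd a * snd a.
Proof. unfold Cabs; apply sqrt_sqrt; nra. Qed.

Lemma Cabs_0 : Cabs Czero = 0.
Proof. unfold Cabs, Czero; simpl. replace (0*0+0*0) with 0 by ring. apply sqrt_0. Qed.

Lemma Cabs_eq0 a : Cabs a = 0 -> a = Czero.
Proof. intro H. pose proof (Cabs_sqr a) as Hsq. rewrite H in Hsq. apply Cx_eq; simpl; nra. Qed.

Lemma Cabs_triangle a b : Cabs (Cadd a b) <= Cabs a + Cabs b.
Proof.
  pose proof (Cabs_sqr a); pose proof (Cabs_sqr b); pose proof (Cabs_sqr (Cadd a b)).
  pose proof (Cabs_ge0 a); pose proof (Cabs_ge0 b).
  destruct a as [x1 x2], b as [y1 y2]; unfold Cadd in *; simpl in *.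
  set (A := Cabs (x1, x2)) in *; set (B := Cabs (y1, y2)) in *.
  assert (Hdot : (x1*y1 + x2*y2) * (x1*y1 + x2*y2) <= (A*B) * (A*B)).
  { replace ((A*B) * (A*B)) with ((A*A) * (B*B)) by ring.
    pose proof (Rle_0_sqr (x1*y2 - x2*y1)); unfold Rsqr in *. nra. }
  assert (x1*y1 + x2*y2 <= A*B) by (apply Rle_of_sqr_le; nra).
  apply Rle_of_sqr_le; nra.
Qed.

Lemma Cabs_mul a b : Cabs (Cmul a b) = Cabs a * Cabs b.
Proof. unfold Cabs, Cmul; rewrite <- sqrt_mult by nra. f_equal; simpl; ring. Qed.

Lemma Cabs_Csub_sym a b : Cabs (Csub a b) = Cabs (Csub b a).
Proof. unfold Cabs, Csub, Cadd, Copp; simpl; f_equal; ring. Qed.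

Lemma Cabs_Csub_triangle a b c : Cabs (Csub a c) <= Cabs (Csub a b) + Cabs (Csub b c).
Proof.
  replace (Csub a c) with (Cadd (Csub a b) (Csub b c)) by Cx_ring.
  apply Cabs_triangle.
Qed.

Lemma Cabs_Csub_diag a : Cabs (Csub a a) = 0.
Proof. replace (Csub a a) with Czero by Cx_ring. apply Cabs_0. Qed.

Lemma Cabs_pair_le a b : 0 <= a -> 0 <= b -> Cabs (a, b) <= a + b.
Proof.
  intros Ha Hb. apply Rle_of_sqr_le; [lra|]. rewrite Cabs_sqr; simpl; nra.
Qed.

Lemma normsq_ge0 n v : 0 <= normsq n v.
Proof. induction n; simpl; [lra|]. pose proof (Cabs_ge0 (v n)); nra. Qed.

Lemma vnorm_ge0 n v : 0 <= vnorm n v.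
Proof. apply sqrt_pos. Qed.

Lemma vnorm_sqr n v : vnorm n v * vnorm n v = normsq n v.
Proof. apply sqrt_sqrt, normsq_ge0. Qed.

Lemma vnorm_S n v : vnorm (S n) v = Cabs (vnorm n v, Cabs (v n)).
Proof. unfold Cabs at 1; simpl. rewrite vnorm_sqr. reflexivity. Qed.

Lemma normsq_ext n u v : (forall i, (i < n)%nat -> u i = v i) -> normsq n u = normsq n v.
Proof.
  induction n; intros H; simpl; auto.
  rewrite IHn by (intros; apply H; lia). rewrite H by lia. reflexivity.
Qed.

Lemma lin_ext n a b h k :
  (forall i, (i < n)%nat -> a i = b i /\ h i = k i) -> lin n a h = lin n b k.
Proof.
  induction n; intros H; simpl; auto.
  rewrite IHn by (intros; apply H; lia). destruct (H n) as [-> ->]; auto.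
Qed.

Lemma vnorm_le_S n v : vnorm n v <= vnorm (S n) v.
Proof.
  apply sqrt_le_1_alt; simpl. pose proof (Cabs_ge0 (v n)); nra.
Qed.

Lemma Cabs_coord_le_vnorm n v i : (i < n)%nat -> Cabs (v i) <= vnorm n v.
Proof.
  induction 1; rewrite vnorm_S.
  - apply Rle_of_sqr_le; [apply Cabs_ge0|]. rewrite (Cabs_sqr (_, _)); simpl.
    pose proof (vnorm_ge0 i v); nra.
  - eapply Rle_trans; [apply IHle|]. rewrite <- vnorm_S. apply vnorm_le_S.
Qed.

Lemma vnorm_triangle n u v : vnorm n (vadd u v) <= vnorm n u + vnorm n v.
Proof.
  induction n.
  - unfold vnorm; simpl. rewrite sqrt_0; lra.
  - rewrite !vnorm_S. eapply Rle_trans; [|apply Cabs_triangle].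
    pose proof (Cabs_triangle (u n) (v n)).
    pose proof (vnorm_ge0 n (vadd u v)); pose proof (Cabs_ge0 (vadd u v n)).
    pose proof (vnorm_ge0 n u); pose proof (vnorm_ge0 n v).
    pose proof (Cabs_ge0 (u n)); pose proof (Cabs_ge0 (v n)).
    change (vadd u v n) with (Cadd (u n) (v n)) in *.
    set (p := vnorm n (vadd u v)) in *; set (q := Cabs (Cadd (u n) (v n))) in *.
    set (A := vnorm n u) in *; set (B := vnorm n v) in *.
    set (al := Cabs (u n)) in *; set (be := Cabs (v n)) in *.
    unfold Cabs at 1 2, Cadd; simpl. apply sqrt_le_1_alt.
    apply Rplus_le_compat; apply Rmult_le_compat; lra.
Qed.

Fixpoint asum (n : nat) (a : vec) : R :=
  match n with O => 0 | S k => asum k a + Cabs (a k) end.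

Lemma asum_ge0 n a : 0 <= asum n a.
Proof. induction n; simpl; [lra|]. pose proof (Cabs_ge0 (a n)); lra. Qed.

Lemma Cabs_lin_le n a h : Cabs (lin n a h) <= asum n a * vnorm n h.
Proof.
  induction n; simpl.
  - unfold vnorm; simpl. rewrite sqrt_0, Cabs_0; lra.
  - eapply Rle_trans; [apply Cabs_triangle|]. rewrite Cabs_mul.
    pose proof (vnorm_le_S n h). pose proof (Cabs_coord_le_vnorm (S n) h n ltac:(lia)).
    pose proof (asum_ge0 n a). pose proof (Cabs_ge0 (a n)). nra.
Qed.

Lemma lin_0 n a : lin n a (fun _ => Czero) = Czero.
Proof. induction n; simpl; auto. rewrite IHn; Cx_ring. Qed.

Lemma lin_Cadd_Cmul n a b s k :
  lin n (fun i => Cadd (a i) (Cmul s (b i))) k = Cadd (lin n a k) (Cmul s (lin n b k)).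
Proof. induction n; simpl; [Cx_ring|]. rewrite IHn. Cx_ring. Qed.

Lemma vadd_vsub x y : vadd x (vsub y x) = y.
Proof. apply functional_extensionality; intro i; unfold vadd, vsub; Cx_ring. Qed.

Lemma vsub_vadd z k : vsub (vadd z k) z = k.
Proof. apply functional_extensionality; intro i; unfold vsub, vadd; Cx_ring. Qed.

Lemma vadd_0 z : vadd z (fun _ => Czero) = z.
Proof. apply functional_extensionality; intro i; unfold vadd; Cx_ring. Qed.

Lemma vnorm_vsub_triangle n x y z : vnorm n (vsub z x) <= vnorm n (vsub z y) + vnorm n (vsub y x).
Proof.
  replace (vsub z x) with (vadd (vsub z y) (vsub y x))
    by (apply functional_extensionality; intro i; unfold vadd, vsub; Cx_ring).
  apply vnorm_triangle.
Qed.

Lemma vnorm_vsub_diag n x : vnorm n (vsub x x) = 0.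
Proof.
  unfold vnorm. rewrite (normsq_ext n _ (fun _ => Czero)).
  - induction n; simpl; [apply sqrt_0|]. apply sqrt_eq_0 in IHn; [|apply normsq_ge0].
    rewrite IHn, Cabs_0. replace (0 + 0 * 0) with 0 by ring. apply sqrt_0.
  - intros; unfold vsub; Cx_ring.
Qed.

Lemma inCn_vsub n u v : inCn n u -> inCn n v -> inCn n (vsub u v).
Proof. intros Hu Hv i Hi; unfold vsub; rewrite Hu, Hv by auto; Cx_ring. Qed.

Lemma inCn_vadd n u v : inCn n u -> inCn n v -> inCn n (vadd u v).
Proof. intros Hu Hv i Hi; unfold vadd; rewrite Hu, Hv by auto; Cx_ring. Qed.

Lemma vnorm_eq0 n u : inCn n u -> vnorm n u = 0 -> u = (fun _ => Czero).
Proof.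
  intros Hu H. apply functional_extensionality; intro i.
  destruct (Nat.lt_ge_cases i n) as [Hi|Hi]; [|apply Hu; auto].
  apply Cabs_eq0. pose proof (Cabs_coord_le_vnorm n u i Hi). pose proof (Cabs_ge0 (u i)). lra.
Qed.

Lemma ball_open n x r : open_in n (fun y => inCn n y /\ vnorm n (vsub y x) < r).
Proof.
  split; [intros y [Hy _]; auto|].
  intros y [Hy Hyr]. exists (r - vnorm n (vsub y x)). split; [lra|].
  intros y' Hy' Hy'y. split; auto. pose proof (vnorm_vsub_triangle n x y y'). lra.
Qed.

(* [holo_on n U f] says exactly that every point of U has a differential. *)
Definition differential_at (n : nat) (f : vec -> Cx) (z a : vec) : Prop :=
  forall eps, 0 < eps -> exists d, 0 < d /\
    forall h, inCn n h -> 0 < vnorm n h -> vnorm n h < d ->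
      Cabs (Csub (Csub (f (vadd z h)) (f z)) (lin n a h)) <= eps * vnorm n h.

Lemma differential_at_increment_le n f z a : differential_at n f z a ->
  exists d, 0 < d /\ forall k, inCn n k -> 0 < vnorm n k -> vnorm n k < d ->
    Cabs (Csub (f (vadd z k)) (f z)) <= (asum n a + 1) * vnorm n k.
Proof.
  intros Ha. destruct (Ha 1 ltac:(lra)) as [d [Hd Hdiff]]. exists d; split; auto.
  intros k Hk Hkpos Hkd. specialize (Hdiff k Hk Hkpos Hkd).
  replace (Csub (f (vadd z k)) (f z)) with
    (Cadd (Csub (Csub (f (vadd z k)) (f z)) (lin n a k)) (lin n a k)) by Cx_ring.
  pose proof (Cabs_lin_le n a k). eapply Rle_trans; [apply Cabs_triangle|]. lra.
Qed.

Lemma holo_on_continuous n U g z : open_in n U -> holo_on n U g -> U z ->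
  forall eps, 0 < eps -> exists d, 0 < d /\ forall y, inCn n y ->
    vnorm n (vsub y z) < d -> Cabs (Csub (g y) (g z)) < eps.
Proof.
  intros HU Hg Hz eps Heps. destruct (Hg z Hz) as [a Ha].
  destruct (differential_at_increment_le n g z a Ha) as [d [Hd Hinc]].
  pose proof (asum_ge0 n a) as Ha0. set (L := asum n a + 1) in *.
  exists (Rmin d (eps / L)).
  pose proof (Rmin_l d (eps / L)); pose proof (Rmin_r d (eps / L)).
  split; [apply Rmin_pos; [|apply Rdiv_lt_0_compat]; unfold L; lra|].
  intros y Hy Hyz. rewrite <- (vadd_vsub z y).
  assert (Hk : inCn n (vsub y z)) by (apply inCn_vsub; auto; apply (proj1 HU); auto).
  set (k := vsub y z) in *. pose proof (vnorm_ge0 n k).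
  destruct (Req_dec (vnorm n k) 0) as [E|E].
  - apply vnorm_eq0 in E; auto. rewrite E, vadd_0, Cabs_Csub_diag; auto.
  - specialize (Hinc k Hk ltac:(lra) ltac:(lra)).
    assert (vnorm n k * L < eps / L * L) by (apply Rmult_lt_compat_r; [unfold L|]; lra).
    replace (eps / L * L) with eps in * by (field; unfold L; lra). lra.
Qed.

Lemma holo1_on_ext c r g1 g2 : (forall z, Defs.disc c r z -> g1 z = g2 z) ->
  holo1_on (Defs.disc c r) g1 -> holo1_on (Defs.disc c r) g2.
Proof.
  intros Heq Hg z Dz. destruct (Hg z Dz) as [a Ha]. exists a. intros eps Heps.
  destruct (Ha eps Heps) as [d [Hd Hdiff]]. unfold Defs.disc in Dz.
  exists (Rmin d (r - Cabs (Csub z c))). split; [apply Rmin_pos; lra|].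
  intros h Hh1 Hh2.
  pose proof (Rmin_l d (r - Cabs (Csub z c))); pose proof (Rmin_r d (r - Cabs (Csub z c))).
  assert (Defs.disc c r (Cadd z h)).
  { unfold Defs.disc. replace (Csub (Cadd z h) c) with (Cadd (Csub z c) h) by Cx_ring.
    pose proof (Cabs_triangle (Csub z c) h). lra. }
  rewrite <- !Heq by (unfold Defs.disc; auto). apply Hdiff; lra.
Qed.

Definition extend (m : nat) (w : Cx) (z : vec) : vec :=
  fun i => if Nat.eqb i m then w else z i.

Lemma extend_at m w z : extend m w z m = w.
Proof. unfold extend; rewrite Nat.eqb_refl; auto. Qed.

Lemma inCn_extend m w z : inCn m z -> inCn (S m) (extend m w z).
Proof. intros H i Hi; unfold extend. destruct (Nat.eqb_spec i m); [lia|]. apply H; lia. Qed.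

Lemma inCn_trunc m v : inCn m (trunc m v).
Proof. intros i Hi; unfold trunc. destruct (Nat.ltb_spec i m); [lia|auto]. Qed.

Lemma trunc_extend m w z : inCn m z -> trunc m (extend m w z) = z.
Proof.
  intros H; apply functional_extensionality; intro i; unfold trunc, extend.
  destruct (Nat.ltb_spec i m); destruct (Nat.eqb_spec i m); try lia; auto.
  all: symmetry; apply H; lia.
Qed.

Lemma extend_trunc m v : inCn (S m) v -> extend m (v m) (trunc m v) = v.
Proof.
  intros H; apply functional_extensionality; intro i; unfold trunc, extend.
  destruct (Nat.ltb_spec i m); destruct (Nat.eqb_spec i m); subst; try lia; auto.
  symmetry; apply H; lia.
Qed.

Lemma trunc_vadd m z h : trunc m (vadd z h) = vadd (trunc m z) (trunc m h).
Proof.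
  apply functional_extensionality; intro i; unfold trunc, vadd.
  destruct (i <? m); auto. Cx_ring.
Qed.

Lemma normsq_extend_vsub m w w' z x :
  normsq (S m) (vsub (extend m w z) (extend m w' x)) =
  normsq m (vsub z x) + Cabs (Csub w w') * Cabs (Csub w w').
Proof.
  simpl. replace (vsub (extend m w z) (extend m w' x) m) with (Csub w w')
    by (unfold vsub; rewrite !extend_at; auto).
  f_equal. apply normsq_ext; intros i Hi; unfold vsub, extend.
  destruct (Nat.eqb_spec i m); [lia|auto].
Qed.

Lemma vnorm_extend_vsub_ge m w w' z x :
  vnorm m (vsub z x) <= vnorm (S m) (vsub (extend m w z) (extend m w' x)).
Proof.
  apply sqrt_le_1_alt. rewrite normsq_extend_vsub.
  pose proof (Cabs_ge0 (Csub w w')); nra.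
Qed.

Lemma vnorm_extend_vsub_le m w w' z x :
  vnorm (S m) (vsub (extend m w z) (extend m w' x)) <=
  vnorm m (vsub z x) + Cabs (Csub w w').
Proof.
  eapply Rle_trans; [|apply Cabs_pair_le; [apply vnorm_ge0|apply Cabs_ge0]].
  apply Rle_of_sqr_le; [apply Cabs_ge0|].
  rewrite vnorm_sqr, normsq_extend_vsub, (Cabs_sqr (_, _)); simpl; rewrite vnorm_sqr; lra.
Qed.

Lemma vnorm_trunc_vsub_le m y x :
  vnorm m (vsub (trunc m y) (trunc m x)) <= vnorm (S m) (vsub y x).
Proof.
  unfold vnorm at 1. rewrite (normsq_ext m _ (vsub y x)).
  - apply vnorm_le_S.
  - intros i Hi; unfold vsub, trunc. destruct (Nat.ltb_spec i m); [auto|lia].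
Qed.

Lemma vnorm_trunc_le m h : vnorm m (trunc m h) <= vnorm (S m) h.
Proof.
  unfold vnorm at 1. rewrite (normsq_ext m _ h).
  - apply vnorm_le_S.
  - intros i Hi; unfold trunc. destruct (Nat.ltb_spec i m); [auto|lia].
Qed.

Lemma lin_trunc m a h : lin (S m) (trunc m a) h = lin m a (trunc m h).
Proof.
  simpl. rewrite (lin_ext m (trunc m a) a h (trunc m h)).
  - unfold trunc at 2; rewrite Nat.ltb_irrefl. Cx_ring.
  - intros i Hi; unfold trunc. destruct (Nat.ltb_spec i m); [auto|lia].
Qed.

Lemma lin_extend_vsub m a w w' z' z :
  lin (S m) a (vsub (extend m w' z') (extend m w z)) =
  Cadd (lin m a (vsub z' z)) (Cmul (a m) (Csub w' w)).
Proof.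
  simpl. replace (vsub (extend m w' z') (extend m w z) m) with (Csub w' w)
    by (unfold vsub; rewrite !extend_at; auto).
  f_equal. apply lin_ext; intros i Hi; split; auto. unfold vsub, extend.
  destruct (Nat.eqb_spec i m); [lia|auto].
Qed.

Lemma open_in_trunc_preimage m U :
  open_in m U -> open_in (S m) (fun v => inCn (S m) v /\ U (trunc m v)).
Proof.
  intros HU. split; [intros x [Hx _]; auto|].
  intros x [Hx Ux]. destruct (proj2 HU _ Ux) as [r [Hr Hball]].
  exists r; split; auto. intros y Hy Hyx. split; auto. apply Hball.
  - apply inCn_trunc.
  - pose proof (vnorm_trunc_vsub_le m y x); lra.
Qed.

Lemma holo_on_trunc m U g : holo_on m U g ->
  holo_on (S m) (fun v => inCn (S m) v /\ U (trunc m v)) (fun v => g (trunc m v)).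
Proof.
  intros Hg z [Hz Uz]. destruct (Hg _ Uz) as [a Ha]. exists (trunc m a).
  intros eps Heps. destruct (Ha eps Heps) as [d [Hd Hdiff]]. exists d; split; auto.
  intros h Hh Hpos Hhd. rewrite lin_trunc, trunc_vadd.
  pose proof (vnorm_trunc_le m h); pose proof (vnorm_ge0 m (trunc m h)).
  destruct (Req_dec (vnorm m (trunc m h)) 0) as [E|E].
  - apply vnorm_eq0 in E; [|apply inCn_trunc]. rewrite E, vadd_0, lin_0.
    replace (Csub (Csub (g (trunc m z)) (g (trunc m z))) Czero) with Czero by Cx_ring.
    rewrite Cabs_0. nra.
  - specialize (Hdiff (trunc m h) (inCn_trunc m h) ltac:(lra) ltac:(lra)). nra.
Qed.

Lemma vnorm_extend_increment_le m h z k L :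
  Cabs (Csub (h (vadd z k)) (h z)) <= L * vnorm m k ->
  vnorm (S m) (vsub (extend m (h (vadd z k)) (vadd z k)) (extend m (h z) z)) <= (L + 1) * vnorm m k.
Proof.
  intros Hinc. pose proof (vnorm_extend_vsub_le m (h (vadd z k)) (h z) (vadd z k) z).
  rewrite vsub_vadd in *. lra.
Qed.

Lemma differential_at_extend_comp m g h z a b : inCn m z ->
  differential_at (S m) g (extend m (h z) z) a -> differential_at m h z b ->
  differential_at m (fun z => g (extend m (h z) z)) z (fun i => Cadd (a i) (Cmul (a m) (b i))).
Proof.
  intros Hz Ha Hb eps Heps. set (p := extend m (h z) z).
  pose proof (asum_ge0 m b) as HB0. set (B := asum m b) in *.
  pose proof (Cabs_ge0 (a m)) as HA0. set (A := Cabs (a m)) in *.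
  set (M := B + 2). set (eg := eps / (2 * M)). set (eh := eps / (2 * (A + 1))).
  assert (Heg : 0 < eg) by (apply Rdiv_lt_0_compat; unfold M; lra).
  assert (Heh : 0 < eh) by (apply Rdiv_lt_0_compat; lra).
  assert (HegM : eg * M = eps / 2) by (unfold eg, M; field; lra).
  assert (HehA : eh * (A + 1) = eps / 2) by (unfold eh; field; lra).
  destruct (Ha eg Heg) as [dg [Hdg Hga]].
  destruct (differential_at_increment_le m h z b Hb) as [d1 [Hd1 Hinc]].
  destruct (Hb eh Heh) as [dh [Hdh Hhb]].
  exists (Rmin (Rmin dh d1) (dg / M)). split.
  { apply Rmin_pos; [apply Rmin_pos; auto|]. apply Rdiv_lt_0_compat; unfold M; lra. }
  intros k Hk Hkpos Hkd.
  pose proof (Rmin_l (Rmin dh d1) (dg / M)); pose proof (Rmin_r (Rmin dh d1) (dg / M)).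
  pose proof (Rmin_l dh d1); pose proof (Rmin_r dh d1).
  specialize (Hinc k Hk Hkpos ltac:(lra)). specialize (Hhb k Hk Hkpos ltac:(lra)).
  pose proof (vnorm_extend_increment_le m h z k _ Hinc) as HDle.
  pose proof (vnorm_extend_vsub_ge m (h (vadd z k)) (h z) (vadd z k) z) as HDge.
  rewrite vsub_vadd in HDge. fold B p in HDle, HDge.
  replace (B + 1 + 1) with M in HDle by (unfold M; ring).
  set (D := vsub (extend m (h (vadd z k)) (vadd z k)) p) in *.
  assert (HDin : inCn (S m) D).
  { apply inCn_vsub; apply inCn_extend; [apply inCn_vadd|]; auto. }
  assert (HDd : vnorm (S m) D < dg).
  { assert (vnorm m k * M < dg / M * M) by (apply Rmult_lt_compat_r; [unfold M|]; lra).
    replace (dg / M * M) with dg in * by (field; unfold M; lra). lra. }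
  specialize (Hga D HDin ltac:(lra) HDd). unfold D in Hga at 1. rewrite vadd_vsub in Hga.
  unfold D, p in Hga. rewrite lin_extend_vsub, vsub_vadd in Hga. fold p D in Hga.
  rewrite lin_Cadd_Cmul.
  set (Rh := Csub (Csub (h (vadd z k)) (h z)) (lin m b k)) in *.
  replace (Csub (Csub (g (extend m (h (vadd z k)) (vadd z k))) (g p))
                (Cadd (lin m a k) (Cmul (a m) (lin m b k))))
    with (Cadd (Csub (Csub (g (extend m (h (vadd z k)) (vadd z k))) (g p))
                     (Cadd (lin m a k) (Cmul (a m) (Csub (h (vadd z k)) (h z)))))
               (Cmul (a m) Rh)) by (unfold Rh; Cx_ring).
  eapply Rle_trans; [apply Cabs_triangle|]. rewrite Cabs_mul. fold A.
  pose proof (Cabs_ge0 Rh).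
  assert (eg * vnorm (S m) D <= eg * (M * vnorm m k)) by (apply Rmult_le_compat_l; lra).
  assert (A * Cabs Rh <= A * (eh * vnorm m k)) by (apply Rmult_le_compat_l; lra).
  nra.
Qed.

Lemma holo_on_extend_comp m U g V h : holo_on (S m) U g -> open_in m V -> holo_on m V h ->
  holo_on m (fun z => V z /\ U (extend m (h z) z)) (fun z => g (extend m (h z) z)).
Proof.
  intros Hg HV Hh z [Vz Uz].
  destruct (Hg _ Uz) as [a Ha]. destruct (Hh z Vz) as [b Hb].
  exists (fun i => Cadd (a i) (Cmul (a m) (b i))).
  apply differential_at_extend_comp; auto. apply (proj1 HV); auto.
Qed.

Lemma open_in_extend_preimage m U V h : open_in (S m) U -> open_in m V -> holo_on m V h ->
  open_in m (fun z => V z /\ U (extend m (h z) z)).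
Proof.
  intros HU HV Hh. split; [intros x [Hx _]; apply (proj1 HV); auto|].
  intros z [Vz Uz]. destruct (proj2 HV z Vz) as [r1 [Hr1 HballV]].
  destruct (proj2 HU _ Uz) as [r2 [Hr2 HballU]].
  destruct (holo_on_continuous _ _ _ _ HV Hh Vz (r2 / 2) ltac:(lra)) as [r3 [Hr3 Hcont]].
  exists (Rmin r1 (Rmin (r2 / 2) r3)).
  pose proof (Rmin_l r1 (Rmin (r2 / 2) r3)); pose proof (Rmin_r r1 (Rmin (r2 / 2) r3)).
  pose proof (Rmin_l (r2 / 2) r3); pose proof (Rmin_r (r2 / 2) r3).
  split; [apply Rmin_pos; [|apply Rmin_pos]; lra|].
  intros y Hy Hyz. split; [apply HballV; auto; lra|].
  apply HballU; [apply inCn_extend; auto|].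
  pose proof (vnorm_extend_vsub_le m (h y) (h z) y z).
  specialize (Hcont y Hy ltac:(lra)). lra.
Qed.

Fixpoint min_list {A : Type} (f : A -> R) (l : list A) : R :=
  match l with nil => 1 | cons i l' => Rmin (f i) (min_list f l') end.

Lemma min_list_pos {A} (f : A -> R) l : (forall i, 0 < f i) -> 0 < min_list f l.
Proof. intros H; induction l; simpl; [lra|]. apply Rmin_pos; auto. Qed.

Lemma min_list_le {A} (f : A -> R) l i : List.In i l -> min_list f l <= f i.
Proof.
  induction l; simpl; [tauto|]. intros [->|H].
  - apply Rmin_l.
  - eapply Rle_trans; [apply Rmin_r|auto].
Qed.

(* Cover K by the balls B(x, r_x) and take the least radius of a finite subcover. *)
Lemma compact_uniform_radius n K (P : vec -> R -> Prop) : compact_in n K ->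
  (forall x, K x -> exists r, 0 < r /\ P x r) ->
  exists d, 0 < d /\ forall z, K z ->
    exists x r, P x r /\ d <= r /\ vnorm n (vsub z x) < r.
Proof.
  intros HK Hloc.
  set (I := {p : vec * R | 0 < snd p /\ P (fst p) (snd p)}).
  set (ball_of := fun (i : I) y =>
    inCn n y /\ vnorm n (vsub y (fst (proj1_sig i))) < snd (proj1_sig i)).
  destruct (proj2 HK I ball_of) as [l Hl].
  { intros i; apply ball_open. }
  { intros x Hx. destruct (Hloc x Hx) as [r Hr].
    exists (exist _ (x, r) Hr). unfold ball_of; simpl.
    split; [apply (proj1 HK); auto|]. rewrite vnorm_vsub_diag. apply Hr. }
  exists (min_list (fun i : I => snd (proj1_sig i)) l). split.
  { apply min_list_pos. intros i. exact (proj1 (proj2_sig i)). }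
  intros z Hz. destruct (Hl z Hz) as [i [Hin [_ Hzi]]].
  pose proof (min_list_le (fun i : I => snd (proj1_sig i)) l i Hin).
  destruct i as [[x r] [Hr HP]]; simpl in *. exists x, r. auto.
Qed.

Section Graph.

Variables (m : nat) (K1 : vec -> Prop) (omega : vec -> Cx).
Hypothesis K1_inCn : forall z, K1 z -> inCn m z.

Lemma graph_extend z : K1 z -> graph m K1 omega (extend m (omega z) z).
Proof.
  intros Hz. split; [apply inCn_extend, K1_inCn; auto|].
  rewrite trunc_extend, extend_at by (apply K1_inCn; auto). auto.
Qed.

Lemma extend_trunc_graph v : graph m K1 omega v -> extend m (omega (trunc m v)) (trunc m v) = v.
Proof. intros [Hv [_ Hm]]. rewrite <- Hm. apply extend_trunc; auto. Qed.

Definition graph_pullback (f : vec -> Cx) (z : vec) : Cx := f (extend m (omega z) z).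

Lemma cont_on_graph_pullback f : cont_on (S m) (graph m K1 omega) f -> cont_on m K1 omega ->
  cont_on m K1 (graph_pullback f).
Proof.
  intros Hf Hw x Hx eps Heps.
  destruct (Hf _ (graph_extend x Hx) eps Heps) as [d1 [Hd1 Hcont]].
  destruct (Hw x Hx (d1 / 2) ltac:(lra)) as [d2 [Hd2 Hw']].
  exists (Rmin (d1 / 2) d2). split; [apply Rmin_pos; lra|].
  intros y Hy Hyx. pose proof (Rmin_l (d1 / 2) d2); pose proof (Rmin_r (d1 / 2) d2).
  apply Hcont; [apply graph_extend; auto|].
  pose proof (vnorm_extend_vsub_le m (omega y) (omega x) y x).
  specialize (Hw' y Hy ltac:(lra)). lra.
Qed.

Lemma AD_graph_pullback f : AD (S m) (graph m K1 omega) f -> AD m K1 omega ->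
  AD m K1 (graph_pullback f).
Proof.
  intros [Hcont Hf] Hw. split; [apply cont_on_graph_pullback; auto; apply Hw|].
  intros c r phi Hr Hphi Hinj Hin.
  apply (Hf c r (fun z => extend m (omega (phi z)) (phi z)) Hr).
  - intros i Hi. unfold extend. destruct (Nat.eqb_spec i m).
    + exact (proj2 Hw c r phi Hr Hphi Hinj Hin).
    + apply Hphi; lia.
  - intros z1 z2 H1 H2 E. apply Hinj; auto.
    apply (f_equal (trunc m)) in E. rewrite !trunc_extend in E by (apply K1_inCn; auto). auto.
  - intros z Hz. apply graph_extend; auto.
Qed.

(* A disc in the graph is the lift of its truncation, which is a disc in K1. *)
Lemma AD_graph_of_pullback f : cont_on (S m) (graph m K1 omega) f ->
  AD m K1 (graph_pullback f) -> AD (S m) (graph m K1 omega) f.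
Proof.
  intros Hcont [_ HF]. split; auto. intros c r phi Hr Hphi Hinj Hin.
  apply (holo1_on_ext c r (fun z => graph_pullback f (trunc m (phi z)))).
  { intros z Hz. unfold graph_pullback. rewrite extend_trunc_graph; auto. }
  apply (HF c r (fun z => trunc m (phi z)) Hr).
  - intros i Hi. unfold trunc. destruct (Nat.ltb_spec i m); [|lia]. apply Hphi; lia.
  - intros z1 z2 H1 H2 E. apply Hinj; auto.
    rewrite <- (extend_trunc_graph (phi z1)), <- (extend_trunc_graph (phi z2)), E by auto.
    reflexivity.
  - intros z Hz. apply (Hin z Hz).
Qed.

Lemma Obar_graph_of_pullback f : cont_on (S m) (graph m K1 omega) f ->
  Obar m K1 (graph_pullback f) -> Obar (S m) (graph m K1 omega) f.
Proof.
  intros Hcont [_ HF]. split; auto.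
  intros eps Heps. destruct (HF eps Heps) as [U [g [HU [HKU [Hg Happ]]]]].
  exists (fun v => inCn (S m) v /\ U (trunc m v)), (fun v => g (trunc m v)).
  split; [apply open_in_trunc_preimage; auto|].
  split; [intros v Hv; split; [apply Hv | apply HKU, Hv]|].
  split; [apply holo_on_trunc; auto|].
  intros v Hv. rewrite <- (extend_trunc_graph v Hv) at 1. apply Happ, Hv.
Qed.

End Graph.

Section UniformNeighbourhood.

Variables (m : nat) (K1 : vec -> Prop) (omega : vec -> Cx) (U : vec -> Prop) (g : vec -> Cx).
Hypotheses (K1_compact : compact_in m K1) (omega_cont : cont_on m K1 omega)
  (U_open : open_in (S m) U) (g_holo : holo_on (S m) U g)
  (graph_sub_U : forall z, K1 z -> U (extend m (omega z) z)).

Lemma graph_nbhd_local eps : 0 < eps -> forall x, K1 x ->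
  exists r, 0 < r /\ forall z, K1 z -> forall w,
    vnorm m (vsub z x) < r -> Cabs (Csub w (omega z)) < r ->
    U (extend m w z) /\ Cabs (Csub (g (extend m w z)) (g (extend m (omega x) x))) < eps.
Proof.
  intros Heps x Hx. set (p := extend m (omega x) x).
  assert (Up : U p) by (apply graph_sub_U; auto).
  destruct (proj2 U_open p Up) as [r1 [Hr1 HballU]].
  destruct (holo_on_continuous _ _ _ _ U_open g_holo Up eps Heps) as [r2 [Hr2 Hcont]].
  set (rho := Rmin r1 r2). pose proof (Rmin_l r1 r2); pose proof (Rmin_r r1 r2).
  assert (Hrho : 0 < rho) by (apply Rmin_pos; auto).
  destruct (omega_cont x Hx (rho / 3) ltac:(lra)) as [dw [Hdw Hw]].
  exists (Rmin dw (rho / 3)). pose proof (Rmin_l dw (rho / 3)); pose proof (Rmin_r dw (rho / 3)).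
  split; [apply Rmin_pos; lra|].
  intros z Hz w Hzx Hwz.
  assert (Hq : inCn (S m) (extend m w z)) by (apply inCn_extend, (proj1 K1_compact); auto).
  assert (Hn : vnorm (S m) (vsub (extend m w z) p) < rho).
  { pose proof (vnorm_extend_vsub_le m w (omega x) z x) as Hle; fold p in Hle.
    pose proof (Cabs_Csub_triangle w (omega z) (omega x)).
    specialize (Hw z Hz ltac:(lra)). lra. }
  unfold rho in Hn. split; [apply HballU; auto; lra|]. apply Hcont; auto; lra.
Qed.

Lemma graph_nbhd_uniform eps : 0 < eps ->
  exists d, 0 < d /\ forall z, K1 z -> forall w, Cabs (Csub w (omega z)) < d ->
    U (extend m w z) /\ Cabs (Csub (g (extend m w z)) (g (extend m (omega z) z))) < eps.
Proof.
  intros Heps.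
  destruct (compact_uniform_radius m K1 _ K1_compact
              (graph_nbhd_local (eps / 2) ltac:(lra))) as [d [Hd Hunif]].
  exists d. split; auto. intros z Hz w Hwz.
  destruct (Hunif z Hz) as [x [r [Hx [Hdr Hzx]]]].
  destruct (Hx z Hz w Hzx ltac:(lra)) as [HUw Hw].
  destruct (Hx z Hz (omega z) Hzx ltac:(rewrite Cabs_Csub_diag; lra)) as [_ Homega].
  split; auto.
  eapply Rle_lt_trans; [apply (Cabs_Csub_triangle _ (g (extend m (omega x) x)))|].
  rewrite (Cabs_Csub_sym _ (g (extend m (omega z) z))). lra.
Qed.

End UniformNeighbourhood.

Lemma Obar_graph_pullback m K1 omega f : compact_in m K1 -> Obar m K1 omega ->
  Obar (S m) (graph m K1 omega) f -> Obar m K1 (graph_pullback m omega f).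
Proof.
  intros HK [Hwcont Hw] [Hfcont Hf].
  split; [apply cont_on_graph_pullback; auto; apply HK|].
  intros eps Heps.
  destruct (Hf (eps / 2) ltac:(lra)) as [U [g [HU [HKU [Hg Happ]]]]].
  assert (HK1U : forall z, K1 z -> U (extend m (omega z) z))
    by (intros; apply HKU, graph_extend; auto; apply HK).
  destruct (graph_nbhd_uniform m K1 omega U g HK Hwcont HU Hg HK1U (eps / 2) ltac:(lra))
    as [d [Hd Hunif]].
  destruct (Hw d Hd) as [V [h [HV [HKV [Hh Happh]]]]].
  assert (Hclose : forall z, K1 z -> Cabs (Csub (h z) (omega z)) < d)
    by (intros; rewrite Cabs_Csub_sym; apply Happh; auto).
  exists (fun z => V z /\ U (extend m (h z) z)), (fun z => g (extend m (h z) z)).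
  split; [apply open_in_extend_preimage; auto|].
  split; [intros z Hz; split; [apply HKV; auto | apply Hunif, Hclose; auto]|].
  split; [apply holo_on_extend_comp; auto|].
  intros z Hz. destruct (Hunif z Hz (h z) (Hclose z Hz)) as [_ Hgh].
  specialize (Happ _ (graph_extend m K1 omega (proj1 HK) z Hz)).
  unfold graph_pullback.
  eapply Rle_lt_trans; [apply (Cabs_Csub_triangle _ (g (extend m (omega z) z)))|].
  rewrite (Cabs_Csub_sym (g (extend m (omega z) z))). lra.
Qed.

Theorem mainTheorem15 :
  forall (m : nat) (K1 : vec -> Prop) (omega : vec -> Cx),
    compact_in m K1 ->
    (forall f, AD m K1 f <-> Obar m K1 f) ->
    AD m K1 omega ->
    forall f, AD (S m) (graph m K1 omega) f <-> Obar (S m) (graph m K1 omega) f.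
Proof.
  intros m K1 omega HK HAD_Obar Homega f.
  pose proof (proj1 HK) as HK1.
  split; intros Hf.
  - apply Obar_graph_of_pullback; [apply Hf|].
    apply HAD_Obar, AD_graph_pullback; auto.
  - apply AD_graph_of_pullback; [apply Hf|].
    apply HAD_Obar, Obar_graph_pullback; auto. apply HAD_Obar; auto.
Qed.
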